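(* Let $\mathcal{G}=(G,<,+,0,\ldots)$ be an o-minimal expansion of an ordered abelian group satisfying the Bounded Condition. Then a cell $C\subseteq G^n$ is good if and only if $C$ is bounded.
   Context: A definable set $M\subseteq G^n$ is bounded if $M\subseteq[b,b']^n$ for some $b,b'\in G$. $\mathcal{G}$ satisfies the Bounded Condition if whenever $M\subseteq G^m$ is a bounded definable set, $N\subseteq G^n$ is a definable set and there is a definable bijection between $M$ and $N$, then $N$ is bounded. Cells are in the sense of o-minimal structures. For $k\le n$ let $p_k:G^n\to G^k$ be the projection onto the first $k$ coordinates. A cell $C\subseteq G^n$ is exceptional if there exist $k$ and a cell $A\subseteq G^{k-1}$ with $p_k(C)=A\times G$. A non-exceptional cell $C$ is bad if there exist $k$, a cell $A\subseteq G^{k-1}$ and a definable $f:A\to G$ with $p_k(C)=\{(x,t)\in A\times G\mid t<f(x)\}$ or $\{(x,t)\in A\times G\mid f(x)<t\}$. A cell is good if it is neither exceptional nor bad. *)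

(* Points of G^n are lists of length n; subsets of G^n are
   predicates on lists (contained in the lists of length n). *)
From Stdlib Require Import List Arith.
Import ListNotations.
Set Implicit Arguments.

Record OAG := {
  carrier :> Type;
  lt : carrier -> carrier -> Prop;
  add : carrier -> carrier -> carrier;
  opp : carrier -> carrier;
  zero : carrier;
  lt_irrefl : forall x, ~ lt x x;
  lt_trans : forall x y z, lt x y -> lt y z -> lt x z;
  lt_total : forall x y, lt x y \/ x = y \/ lt y x;
  addA : forall x y z, add x (add y z) = add (add x y) z;
  addC : forall x y, add x y = add y x;
  add0 : forall x, add zero x = x;
  addN : forall x, add (opp x) x = zero;
  lt_add : forall x y z, lt x y -> lt (add x z) (add y z)
}.

Section Defs.
Variable G : OAG.

Definition le (x y : G) : Prop := lt G x y \/ x = y.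

(** Pieces of a finite union of points and open intervals in G
    (interval endpoints in G ∪ {-oo,+oo}, [None] = infinite endpoint). *)
Inductive piece := Pt (a : G) | Itv (lo hi : option G).

Definition in_piece (p : piece) (t : G) : Prop :=
  match p with
  | Pt a => t = a
  | Itv lo hi =>
      match lo with None => True | Some a => lt G a t end /\
      match hi with None => True | Some b => lt G t b end
  end.

Definition full (n : nat) (x : list G) : Prop := length x = n.

(** An o-minimal expansion of (G,<,+,0): for each n, the collection
    [def n] of definable subsets of G^n (with parameters), following
    van den Dries, "Tame topology and o-minimal structures", Ch. 1. *)
Record omin_exp := {
  def : nat -> (list G -> Prop) -> Prop;
  def_sub : forall n S, def n S -> forall x, S x -> length x = n;
  def_ext : forall n S T, def n S -> (forall x, S x <-> T x) -> def n T;
  def_full : forall n, def n (full n);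
  def_compl : forall n S, def n S -> def n (fun x => full n x /\ ~ S x);
  def_union : forall n S T, def n S -> def n T -> def n (fun x => S x \/ T x);
  def_prodr : forall n S, def n S ->
      def (n + 1) (fun z => exists x t, z = x ++ [t] /\ S x);
  def_prodl : forall n S, def n S ->
      def (1 + n) (fun z => exists t x, z = t :: x /\ S x);
  def_diag : forall n,
      def n (fun x => full n x /\ nth 0 x (zero G) = nth (n - 1) x (zero G));
  def_proj : forall n S, def (n + 1) S ->
      def n (fun x => exists t, S (x ++ [t]));
  def_lt : def 2 (fun z => exists x y, z = [x; y] /\ lt G x y);
  def_add : def 3 (fun z => exists x y, z = [x; y; add G x y]);
  def_pt : forall a : G, def 1 (fun z => z = [a]);
  ominimal : forall S, def 1 S -> exists ps : list piece,
      forall z, S z <-> exists t, z = [t] /\ exists p, In p ps /\ in_piece p t;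
  dense : forall x y : G, lt G x y -> exists z, lt G x z /\ lt G z y;
  no_max : forall x : G, exists y, lt G x y;
  no_min : forall x : G, exists y, lt G y x
}.

Variable M : omin_exp.

Definition in_box (lo hi x : list G) : Prop :=
  length x = length lo /\ length hi = length lo /\
  forall i, i < length lo ->
    lt G (nth i lo (zero G)) (nth i x (zero G)) /\
    lt G (nth i x (zero G)) (nth i hi (zero G)).

Definition def_fun (n : nat) (C : list G -> Prop) (f : list G -> G) : Prop :=
  def M (n + 1) (fun z => exists x, C x /\ z = x ++ [f x]).

Definition cont_on (n : nat) (C : list G -> Prop) (f : list G -> G) : Prop :=
  forall x, C x -> forall a b, lt G a (f x) -> lt G (f x) b ->
    exists lo hi, length lo = n /\ in_box lo hi x /\
      forall y, C y -> in_box lo hi y -> lt G a (f y) /\ lt G (f y) b.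

Definition lower_ok (f : option (list G -> G)) (x : list G) (t : G) : Prop :=
  match f with None => True | Some f => lt G (f x) t end.
Definition upper_ok (g : option (list G -> G)) (x : list G) (t : G) : Prop :=
  match g with None => True | Some g => lt G t (g x) end.
Definition ok_bound (n : nat) (C : list G -> Prop) (f : option (list G -> G)) :=
  match f with None => True | Some f => def_fun n C f /\ cont_on n C f end.

(** Cells (van den Dries, Ch. 3, Def. 2.3). *)
Inductive is_cell : nat -> (list G -> Prop) -> Prop :=
| cell_nil : forall D, (forall x, D x <-> x = []) -> is_cell 0 D
| cell_graph : forall n C f D, is_cell n C -> def_fun n C f -> cont_on n C f ->
    (forall z, D z <-> exists x, C x /\ z = x ++ [f x]) -> is_cell (n + 1) D
| cell_band : forall n C (f g : option (list G -> G)) D, is_cell n C ->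
    ok_bound n C f -> ok_bound n C g ->
    (forall x, C x -> match f, g with
                      | Some f, Some g => lt G (f x) (g x)
                      | _, _ => True end) ->
    (forall z, D z <-> exists x t, z = x ++ [t] /\ C x /\
                         lower_ok f x t /\ upper_ok g x t) ->
    is_cell (n + 1) D.

Definition proj (k : nat) (C : list G -> Prop) (y : list G) : Prop :=
  exists x, C x /\ y = firstn k x.

Definition bounded (S : list G -> Prop) : Prop :=
  exists b b' : G, forall x, S x -> Forall (fun y => le b y /\ le y b') x.

Definition def_bij (m n : nat) (M1 N1 : list G -> Prop) : Prop :=
  exists Gam, def M (m + n) Gam /\
    (forall z, Gam z -> exists x y, z = x ++ y /\ M1 x /\ N1 y) /\
    (forall x, M1 x -> exists! y, Gam (x ++ y)) /\
    (forall y, N1 y -> exists! x, Gam (x ++ y)).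

Definition bounded_condition : Prop :=
  forall m n (M1 N1 : list G -> Prop), def M m M1 -> def M n N1 ->
    bounded M1 -> def_bij m n M1 N1 -> bounded N1.

(** Exceptional / bad / good cells; p_(k+1) with k < n covers 1 <= k+1 <= n. *)
Definition exceptional (n : nat) (C : list G -> Prop) : Prop :=
  exists k A, k < n /\ is_cell k A /\
    forall z, proj (k + 1) C z <-> exists x t, z = x ++ [t] /\ A x.

Definition bad (n : nat) (C : list G -> Prop) : Prop :=
  ~ exceptional n C /\
  exists k A f, k < n /\ is_cell k A /\ def_fun k A f /\
    ((forall z, proj (k + 1) C z <-> exists x t, z = x ++ [t] /\ A x /\ lt G t (f x))
     \/
     (forall z, proj (k + 1) C z <-> exists x t, z = x ++ [t] /\ A x /\ lt G (f x) t)).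

Definition good (n : nat) (C : list G -> Prop) : Prop :=
  ~ exceptional n C /\ ~ bad n C.

End Defs.

Arguments bounded {G} S.
Arguments le {G} x y.

(* A bounded cell is good: an exceptional or bad cell has a projection
   containing a ray {a} x (c, +oo) or {a} x (-oo, c), and the projections of a
   bounded set are bounded.  A good cell lies
   over a good cell, which is bounded by induction.  The graph of a definable
   function over a bounded cell C is in definable bijection with C through
   x |-> (x, f x), so it is bounded by the Bounded Condition.  A good band has
   both boundary functions, since otherwise its own projection p_(n+1) would make
   it bad or exceptional, and it is squeezed between their bounded values.  The
   definability of cells and of that bijection follows from the closure of
   definable sets under substitution of coordinates. *)

From Stdlib Require Import List Arith Lia Classical.
Import ListNotations.

Section Lists.
Context {A : Type}.

Lemma snoc_split (z : list A) n : length z = S n ->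
  exists x t, z = x ++ [t] /\ length x = n.
Proof.
  intros Hl. destruct (exists_last (l := z)) as [x [t ->]].
  { intros ->; discriminate. }
  exists x, t; split; auto. rewrite length_app in Hl; simpl in Hl; lia.
Qed.

Lemma app_eq_len (a b c d : list A) :
  length a = length b -> a ++ c = b ++ d -> a = b /\ c = d.
Proof.
  revert b; induction a as [|x a IH]; intros [|y b] Hl He; simpl in *;
    try discriminate; auto.
  injection He as -> He. injection Hl as Hl.
  destruct (IH b Hl He) as [-> ->]. auto.
Qed.

Lemma map_nth_seq_app (x y z : list A) d :
  map (fun i => nth i (x ++ y ++ z) d) (seq (length x) (length y)) = y.
Proof.
  revert x; induction y as [|a y IH]; intros x; simpl; auto.
  rewrite <- (Nat.add_0_r (length x)) at 1. rewrite app_nth2_plus. f_equal.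
  specialize (IH (x ++ [a])). rewrite length_app, <- !app_assoc, Nat.add_1_r in IH.
  exact IH.
Qed.

Lemma map_nth_seq_prefix (x y : list A) d :
  map (fun i => nth i (x ++ y) d) (seq 0 (length x)) = x.
Proof. exact (map_nth_seq_app [] x y d). Qed.

Lemma map_nth_seq_suffix (x y : list A) d :
  map (fun i => nth i (x ++ y) d) (seq (length x) (length y)) = y.
Proof. pose proof (map_nth_seq_app x y [] d) as H. rewrite app_nil_r in H. exact H. Qed.

Lemma nth_map_nth (l : list A) s d j : j < length s ->
  nth j (map (fun i => nth i l d) s) d = nth (nth j s 0) l d.
Proof.
  intros Hj. rewrite (nth_indep _ d (nth 0 l d)) by (rewrite length_map; auto).
  apply (map_nth (fun i => nth i l d)).
Qed.

Lemma nth_firstn_lt (z : list A) L i d : i < L -> nth i (firstn L z) d = nth i z d.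
Proof. intros H. rewrite nth_firstn. destruct (Nat.ltb_spec i L); auto; lia. Qed.

End Lists.

Section Order.
Context {G : OAG}.

Lemma oag_le_trans {a b c : G} : le a b -> le b c -> le a c.
Proof. intros [H1| ->] [H2| ->]; [left; exact (lt_trans G _ _ _ H1 H2)|left|left|right]; auto. Qed.

Lemma oag_lt_le_trans {a b c : G} : lt G a b -> le b c -> lt G a c.
Proof. intros H [H2| ->]; [exact (lt_trans G _ _ _ H H2)|exact H]. Qed.

Lemma oag_le_lt_trans {a b c : G} : le a b -> lt G b c -> lt G a c.
Proof. intros [H1| ->] H; [exact (lt_trans G _ _ _ H1 H)|exact H]. Qed.

Lemma oag_lt_le_false {a b : G} : lt G a b -> le b a -> False.
Proof. intros H Hba. exact (lt_irrefl G a (oag_lt_le_trans H Hba)). Qed.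

Lemma oag_lower_bound2 (a b : G) : exists c, le c a /\ le c b.
Proof.
  destruct (lt_total G a b) as [H|[->|H]];
    [exists a|exists b|exists b]; unfold le; auto.
Qed.

Lemma oag_upper_bound2 (a b : G) : exists c, le a c /\ le b c.
Proof.
  destruct (lt_total G a b) as [H|[->|H]];
    [exists b|exists b|exists a]; unfold le; auto.
Qed.

End Order.

Section Definability.
Context {G : OAG} (M : omin_exp G).
Notation z0 := (zero G).

Definition lies_in (n : nat) (C : list G -> Prop) : Prop :=
  forall x, C x -> length x = n.

Definition rel2 (R : G -> G -> Prop) (z : list G) : Prop :=
  exists a b, z = [a; b] /\ R a b.

Definition graph (C : list G -> Prop) (f : list G -> G) (z : list G) : Prop :=
  exists x, C x /\ z = x ++ [f x].

Lemma def_inter {N S T} : def M N S -> def M N T -> def M N (fun x => S x /\ T x).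
Proof.
  intros HS HT.
  pose proof (def_compl M _ _
    (def_union M _ _ _ (def_compl M _ _ HS) (def_compl M _ _ HT))) as H.
  eapply def_ext; [exact H|]. intros x; split.
  - intros [Hf Hn]. destruct (classic (S x)), (classic (T x)); tauto.
  - intros [Hs Ht]. split; [exact (def_sub M _ _ HS _ Hs)|tauto].
Qed.

Lemma def_cylinder_r N k S : def M N S ->
  def M (N + k) (fun z => length z = N + k /\ S (firstn N z)).
Proof.
  intros HS. induction k as [|k IH].
  - rewrite Nat.add_0_r. eapply def_ext; [exact HS|]. intros x; split.
    + intros Hx. pose proof (def_sub M _ _ HS _ Hx).
      rewrite firstn_all2 by lia. auto.
    + intros [Hl Hx]. rewrite firstn_all2 in Hx by lia. exact Hx.
  - rewrite Nat.add_succ_r, <- Nat.add_1_r.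
    eapply def_ext; [exact (def_prodr M _ _ IH)|]. intros z; split.
    + intros (x & t & -> & Hl & Hx). rewrite length_app; simpl.
      rewrite firstn_app, (proj2 (Nat.sub_0_le N _)) by lia.
      simpl; rewrite app_nil_r. split; [lia|exact Hx].
    + intros [Hl Hx]. destruct (snoc_split z (N + k)) as (x & t & -> & Hx'); [lia|].
      exists x, t. rewrite firstn_app, (proj2 (Nat.sub_0_le N _)), app_nil_r in Hx by lia.
      auto.
Qed.

Lemma def_cylinder_l k N S : def M N S ->
  def M (k + N) (fun z => length z = k + N /\ S (skipn k z)).
Proof.
  intros HS. induction k as [|k IH].
  - eapply def_ext; [exact HS|]. intros x; split.
    + intros Hx. split; [exact (def_sub M _ _ HS _ Hx)|exact Hx].
    + intros [_ Hx]. exact Hx.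
  - eapply def_ext; [exact (def_prodl M _ _ IH)|]. intros z; split.
    + intros (t & x & -> & Hl & Hx). simpl. auto.
    + intros [Hl Hx]. destruct z as [|t x]; [discriminate|]. exists t, x. auto.
Qed.

Lemma def_proj_tail N k S : def M (N + k) S ->
  def M N (fun x => exists y, length y = k /\ S (x ++ y)).
Proof.
  revert S. induction k as [|k IH]; intros S HS.
  - rewrite Nat.add_0_r in HS. eapply def_ext; [exact HS|]. intros x; split.
    + intros Hx. exists []. rewrite app_nil_r. auto.
    + intros ([|a y] & Hl & Hx); [rewrite app_nil_r in Hx; exact Hx|discriminate].
  - rewrite Nat.add_succ_r, <- Nat.add_1_r in HS.
    eapply def_ext; [exact (IH _ (def_proj M _ _ HS))|]. intros x; split.
    + intros (y & Hl & t & Hy). exists (y ++ [t]).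
      rewrite length_app, app_assoc. simpl. split; [lia|exact Hy].
    + intros (y & Hl & Hy). destruct (snoc_split y k) as (y' & t & -> & Hy'); auto.
      exists y'. split; auto. exists t. rewrite <- app_assoc. exact Hy.
Qed.

(* The diagonal axiom only equates the first and last coordinates; padding it
   on both sides moves the two equated coordinates to positions [i] and [j]. *)
Lemma def_eq N i j : i < j -> j < N ->
  def M N (fun w => length w = N /\ nth i w z0 = nth j w z0).
Proof.
  intros Hij HjN.
  pose proof (def_cylinder_r _ (N - (i + (j - i + 1))) _
    (def_cylinder_l i _ _ (def_diag M (j - i + 1)))) as H.
  replace (i + (j - i + 1) + (N - (i + (j - i + 1)))) with N in H by lia.
  eapply def_ext; [exact H|]. intros w; unfold full.
  rewrite !nth_skipn, !nth_firstn_lt by lia.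
  replace (i + (j - i + 1 - 1)) with j by lia. rewrite Nat.add_0_r.
  split; [intros (Hl & _ & _ & He); auto|intros [Hl He]].
  rewrite length_skipn, firstn_length_le by lia. repeat split; auto; lia.
Qed.

Lemma def_forall_lt N m (P : nat -> list G -> Prop) :
  (forall j, j < m -> def M N (fun w => length w = N /\ P j w)) ->
  def M N (fun w => length w = N /\ forall j, j < m -> P j w).
Proof.
  induction m as [|m IH]; intros HP.
  - eapply def_ext; [exact (def_full M N)|]. unfold full.
    intros w; split; [intros Hl; split; [exact Hl|intros; lia]|intros [Hl _]; exact Hl].
  - eapply def_ext; [exact (def_inter (IH (fun j Hj => HP j ltac:(lia))) (HP m ltac:(lia)))|].
    intros w; split.
    + intros [[Hl HPw] [_ HPm]]. split; [exact Hl|].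
      intros j Hj. destruct (Nat.eq_dec j m) as [->|]; [exact HPm|apply HPw; lia].
    + intros [Hl HPw]. split; split; auto.
Qed.

(* [S] is placed on [m] extra coordinates, tied to the coordinates [s_j] by
   equations, which are then projected away. *)
Lemma def_pullback N m s S : length s = m -> Forall (fun i => i < N) s -> def M m S ->
  def M N (fun w => length w = N /\ S (map (fun i => nth i w z0) s)).
Proof.
  intros Hm Hs HS. rewrite Forall_forall in Hs.
  assert (Hsj : forall j, j < m -> nth j s 0 < N) by (intros j Hj; apply Hs, nth_In; lia).
  pose proof (def_inter (def_cylinder_l N _ _ HS)
    (def_forall_lt (N + m) m (fun j w => nth (nth j s 0) w z0 = nth (N + j) w z0)
       (fun j Hj => def_eq (N + m) (nth j s 0) (N + j) ltac:(specialize (Hsj j Hj); lia) ltac:(lia))))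
    as H.
  eapply def_ext; [exact (def_proj_tail N m _ H)|]. intros x; split.
  - intros (y & Hy & [[Hl HSy] [_ Heq]]). rewrite length_app in Hl.
    rewrite skipn_app, skipn_all2 in HSy by lia.
    replace (N - length x) with 0 in HSy by lia. simpl in HSy.
    split; [lia|]. replace (map _ s) with y; [exact HSy|].
    apply nth_ext with z0 z0; [rewrite length_map; lia|]. intros j Hj.
    rewrite nth_map_nth by lia. specialize (Heq j ltac:(lia)).
    rewrite app_nth1 in Heq by (specialize (Hsj j ltac:(lia)); lia).
    replace N with (length x) in Heq by lia. rewrite app_nth2_plus in Heq. auto.
  - intros [Hl HSx]. exists (map (fun i => nth i x z0) s).
    rewrite length_map, length_app, length_map. split; [lia|].
    split; split; [lia| |lia|].
    + rewrite <- Hl, skipn_app, skipn_all2, Nat.sub_diag by lia. exact HSx.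
    + intros j Hj. rewrite app_nth1 by (specialize (Hsj j Hj); lia).
      rewrite <- Hl, app_nth2_plus, nth_map_nth by lia. reflexivity.
Qed.

Lemma def_rel2_flip R : def M 2 (rel2 R) -> def M 2 (rel2 (fun a b => R b a)).
Proof.
  intros HR.
  eapply def_ext; [exact (def_pullback 2 2 [1; 0] _ eq_refl ltac:(repeat constructor) HR)|].
  intros z; split.
  - intros [Hl (a & b & Hab & Rab)]. destruct z as [|x [|y [|]]]; try discriminate.
    injection Hab as <- <-. exists x, y. auto.
  - intros (a & b & -> & Rab). split; [reflexivity|]. exists b, a. auto.
Qed.

Lemma def_graph_rel n C f R : lies_in n C ->
  def_fun M n C f -> def M 2 (rel2 R) ->
  def M (n + 1) (fun z => exists x t, z = x ++ [t] /\ C x /\ R (f x) t).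
Proof.
  intros HL Hf HR.
  assert (Hs : Forall (fun i => i < n + 1 + 1) (seq 0 n ++ [n + 1])).
  { apply Forall_app; split; [apply Forall_forall; intros i Hi; apply in_seq in Hi|];
      repeat constructor; lia. }
  pose proof (def_inter
    (def_pullback (n + 1 + 1) (n + 1) (seq 0 n ++ [n + 1]) (graph C f)
       ltac:(rewrite length_app, length_seq; reflexivity) Hs Hf)
    (def_pullback (n + 1 + 1) 2 [n + 1; n] (rel2 R) eq_refl
       ltac:(repeat constructor; lia) HR)) as H.
  assert (Hread : forall x t s, length x = n ->
    map (fun i => nth i ((x ++ [t]) ++ [s]) z0) (seq 0 n ++ [n + 1]) = x ++ [s] /\
    map (fun i => nth i ((x ++ [t]) ++ [s]) z0) [n + 1; n] = [s; t]).
  { intros x t s <-. rewrite <- app_assoc, map_app, map_nth_seq_prefix. simpl.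
    rewrite <- (Nat.add_0_r (length x)) at 3.
    rewrite !app_nth2_plus. auto. }
  eapply def_ext; [exact (def_proj M _ _ H)|]. intros z; split.
  - intros (s & [[Hl Hg] [_ Hr]]). rewrite length_app in Hl.
    destruct (snoc_split z n) as (x & t & -> & Hx); [simpl in Hl; lia|].
    destruct (Hread x t s Hx) as [E1 E2]. rewrite E1 in Hg. rewrite E2 in Hr.
    destruct Hg as (x' & Hx' & E). apply app_inj_tail in E as [<- Hfx]. subst s.
    destruct Hr as (a & b & Hab & Rab). injection Hab as <- <-.
    exists x, t. auto.
  - intros (x & t & -> & Hx & Rxt). exists (f x).
    destruct (Hread x t (f x) (HL x Hx)) as [E1 E2]. rewrite E1, E2.
    rewrite !length_app, (HL x Hx). simpl.
    split; split; [lia|exists x; auto|lia|exists (f x), t; auto].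
Qed.

Lemma def_graph_pairing n C f : lies_in n C -> def_fun M n C f ->
  def M (n + (n + 1)) (fun w => exists x, C x /\ w = x ++ x ++ [f x]).
Proof.
  intros HL Hf.
  assert (Hs : Forall (fun i => i < n + (n + 1)) (seq n (n + 1))).
  { apply Forall_forall; intros i Hi; apply in_seq in Hi; lia. }
  pose proof (def_inter
    (def_pullback (n + (n + 1)) (n + 1) (seq n (n + 1)) (graph C f) (length_seq _ _) Hs Hf)
    (def_forall_lt (n + (n + 1)) n (fun i w => nth i w z0 = nth (n + i) w z0)
       (fun i (Hi : i < n) => def_eq (n + (n + 1)) i (n + i) ltac:(lia) ltac:(lia)))) as H.
  eapply def_ext; [exact H|]. intros w; split.
  - intros [[Hl Hg] [_ Heq]].
    assert (Hsplit : exists a b, w = a ++ b /\ length a = n).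
    { exists (firstn n w), (skipn n w). rewrite firstn_skipn, firstn_length_le by lia. auto. }
    destruct Hsplit as (a & b & -> & Ha). rewrite length_app in Hl.
    replace (seq n (n + 1)) with (seq (length a) (length b)) in Hg by (f_equal; lia).
    rewrite map_nth_seq_suffix in Hg. destruct Hg as (x & Hx & ->).
    exists x. split; [exact Hx|]. f_equal.
    apply nth_ext with z0 z0; [rewrite (HL x Hx); lia|]. intros i Hi.
    specialize (Heq i ltac:(lia)). rewrite <- Ha, app_nth2_plus in Heq.
    rewrite !app_nth1 in Heq by (rewrite ?(HL x Hx); lia). exact Heq.
  - intros (x & Hx & ->). pose proof (HL x Hx) as Hn.
    rewrite !length_app, Hn. simpl. split; split; [lia| |lia|].
    + replace (seq n (n + 1)) with (seq (length x) (length (x ++ [f x])))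
        by (rewrite length_app, Hn; reflexivity).
      rewrite map_nth_seq_suffix. exists x. auto.
    + intros i Hi. rewrite <- Hn, app_nth2_plus, !app_nth1 by lia. reflexivity.
Qed.

End Definability.

Section Cells.
Context {G : OAG} (M : omin_exp G).

Lemma cell_lies_in n C : is_cell M n C -> lies_in n C.
Proof.
  induction 1 as [D HD|n C f D _ IH _ _ HD|n C f g D _ IH _ _ _ HD]; intros z Hz.
  - apply HD in Hz. subst. reflexivity.
  - apply HD in Hz as (x & Hx & ->). rewrite length_app, (IH x Hx). reflexivity.
  - apply HD in Hz as (x & t & -> & Hx & _). rewrite length_app, (IH x Hx). reflexivity.
Qed.

Lemma band_fiber_nonempty C (f g : option (list G -> G)) x : C x ->
  (forall x, C x -> match f, g with Some f, Some g => lt G (f x) (g x) | _, _ => True end) ->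
  exists t, lower_ok G f x t /\ upper_ok G g x t.
Proof.
  intros Hx Hfg. specialize (Hfg x Hx).
  destruct f as [f|], g as [g|]; simpl in *.
  - destruct (dense M _ _ Hfg) as (t & ?); eauto.
  - destruct (no_max M (f x)) as (t & ?); eauto.
  - destruct (no_min M (g x)) as (t & ?); eauto.
  - exists (zero G); auto.
Qed.

Lemma cell_nonempty n C : is_cell M n C -> exists x, C x.
Proof.
  induction 1 as [D HD|n C f D _ [x Hx] _ _ HD|n C f g D _ [x Hx] _ _ Hfg HD].
  - exists []. apply HD. reflexivity.
  - exists (x ++ [f x]). apply HD. eauto.
  - destruct (band_fiber_nonempty C f g x Hx Hfg) as (t & ? & ?).
    exists (x ++ [t]). apply HD. exists x, t. auto.
Qed.

Lemma def_lower n C f : def M n C -> lies_in n C -> ok_bound M n C f ->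
  def M (n + 1) (fun z => exists x t, z = x ++ [t] /\ C x /\ lower_ok G f x t).
Proof.
  intros HC HL Hf. destruct f as [f|]; simpl in Hf |- *.
  - exact (def_graph_rel M n C f _ HL (proj1 Hf) (def_lt M)).
  - eapply def_ext; [exact (def_prodr M _ _ HC)|]. firstorder.
Qed.

Lemma def_upper n C g : def M n C -> lies_in n C -> ok_bound M n C g ->
  def M (n + 1) (fun z => exists x t, z = x ++ [t] /\ C x /\ upper_ok G g x t).
Proof.
  intros HC HL Hg. destruct g as [g|]; simpl in Hg |- *.
  - exact (def_graph_rel M n C g _ HL (proj1 Hg) (def_rel2_flip M _ (def_lt M))).
  - eapply def_ext; [exact (def_prodr M _ _ HC)|]. firstorder.
Qed.

Lemma cell_definable n C : is_cell M n C -> def M n C.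
Proof.
  induction 1 as [D HD|n C f D _ _ Hf _ HD|n C f g D HC IH Hf Hg _ HD].
  - eapply def_ext; [exact (def_full M 0)|]. intros x. rewrite HD. unfold full.
    apply length_zero_iff_nil.
  - eapply def_ext; [exact Hf|]. intros z. rewrite HD. reflexivity.
  - pose proof (cell_lies_in n C HC) as HL.
    eapply def_ext; [exact (def_inter M (def_lower n C f IH HL Hf) (def_upper n C g IH HL Hg))|].
    intros z. rewrite HD. split.
    + intros [(x & t & -> & Hx & Hlo) (x' & t' & E & _ & Hup)].
      apply app_inj_tail in E as [<- <-]. exists x, t. auto.
    + intros (x & t & -> & Hx & Hlo & Hup). split; exists x, t; auto.
Qed.

Definition lies_over (C D : list G -> Prop) : Prop :=
  (forall z, D z -> exists x t, z = x ++ [t] /\ C x) /\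
  (forall x, C x -> exists t, D (x ++ [t])).

Lemma proj_self N C z : lies_in N C -> proj G N C z <-> C z.
Proof.
  intros HL; split.
  - intros (y & Hy & ->). rewrite firstn_all2 by (rewrite (HL y Hy); lia). exact Hy.
  - intros Hz. exists z. rewrite firstn_all2 by (rewrite (HL z Hz); lia). auto.
Qed.

Lemma proj_lies_over n C D k z : lies_in n C -> lies_over C D -> k <= n ->
  proj G k D z <-> proj G k C z.
Proof.
  intros HL [HDC HCD] Hk.
  assert (Hpre : forall x t, C x -> firstn k (x ++ [t]) = firstn k x).
  { intros x t Hx. rewrite firstn_app, (proj2 (Nat.sub_0_le k _)), app_nil_r by
      (rewrite (HL x Hx); lia). reflexivity. }
  split.
  - intros (y & Hy & ->). destruct (HDC y Hy) as (x & t & -> & Hx).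
    exists x. rewrite Hpre by exact Hx. auto.
  - intros (x & Hx & ->). destruct (HCD x Hx) as (t & Ht).
    exists (x ++ [t]). rewrite Hpre by exact Hx. auto.
Qed.

(* Exceptionality and badness of [C] are witnessed by projections [p_(k+1)]
   with [k + 1 <= n], which [D] shares with [C]. *)
Lemma good_lies_over n C D : lies_in n C -> lies_over C D ->
  good M (n + 1) D -> good M n C.
Proof.
  intros HL HD [Hne Hnb].
  assert (Hp : forall k z, k < n -> proj G (k + 1) D z <-> proj G (k + 1) C z)
    by (intros k z Hk; apply (proj_lies_over n); auto; lia).
  assert (Hexc : ~ exceptional M n C).
  { intros (k & A & Hk & HA & HP). apply Hne. exists k, A.
    split; [lia|]. split; [exact HA|]. intros z. rewrite Hp by exact Hk. apply HP. }
  split; [exact Hexc|]. intros [_ (k & A & f & Hk & HA & Hf & HP)].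
  apply Hnb. split; [exact Hne|]. exists k, A, f.
  split; [lia|]. split; [exact HA|]. split; [exact Hf|].
  destruct HP as [HP|HP]; [left|right]; intros z; rewrite Hp by exact Hk; apply HP.
Qed.

Lemma bounded_sub (S T : list G -> Prop) :
  (forall z, S z -> T z) -> bounded T -> bounded S.
Proof. intros H (b & b' & Hb). exists b, b'. intros x Hx. exact (Hb x (H x Hx)). Qed.

Lemma bounded_proj k (C : list G -> Prop) : bounded C -> bounded (proj G k C).
Proof.
  intros (b & b' & Hb). exists b, b'. intros y (x & Hx & ->).
  specialize (Hb x Hx). rewrite <- (firstn_skipn k x), Forall_app in Hb. tauto.
Qed.

Lemma bounded_snoc_bounds (S : list G -> Prop) : bounded S ->
  exists b b', forall a t, S (a ++ [t]) -> le b t /\ le t b'.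
Proof.
  intros (b & b' & Hb). exists b, b'. intros a t Hat.
  specialize (Hb _ Hat). apply Forall_app in Hb as [_ Hb]. inversion Hb. auto.
Qed.

Lemma bounded_no_ray_up (S : list G -> Prop) a c : bounded S ->
  ~ (forall t, lt G c t -> S (a ++ [t])).
Proof.
  intros HS Hray. destruct (bounded_snoc_bounds S HS) as (b & b' & Hb).
  destruct (oag_upper_bound2 c b') as (m & Hcm & Hb'm).
  destruct (no_max M m) as (t & Hmt).
  apply (oag_lt_le_false (oag_le_lt_trans Hb'm Hmt)).
  apply (Hb a t), Hray, (oag_le_lt_trans Hcm Hmt).
Qed.

Lemma bounded_no_ray_down (S : list G -> Prop) a c : bounded S ->
  ~ (forall t, lt G t c -> S (a ++ [t])).
Proof.
  intros HS Hray. destruct (bounded_snoc_bounds S HS) as (b & b' & Hb).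
  destruct (oag_lower_bound2 c b) as (m & Hmc & Hmb).
  destruct (no_min M m) as (t & Htm).
  apply (oag_lt_le_false (oag_lt_le_trans Htm Hmb)).
  apply (Hb a t), Hray, (oag_lt_le_trans Htm Hmc).
Qed.

Lemma bounded_good n C : bounded C -> good M n C.
Proof.
  intros HC. pose proof (fun k => bounded_proj k C HC) as Hp.
  assert (Hne : ~ exceptional M n C).
  { intros (k & A & _ & HA & HP). destruct (cell_nonempty k A HA) as (a & Ha).
    apply (bounded_no_ray_up _ a (zero G) (Hp (k + 1))).
    intros t _. apply HP. exists a, t. auto. }
  split; [exact Hne|]. intros [_ (k & A & f & _ & HA & _ & [HP|HP])];
    destruct (cell_nonempty k A HA) as (a & Ha).
  - apply (bounded_no_ray_down _ a (f a) (Hp (k + 1))).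
    intros t Ht. apply HP. exists a, t. auto.
  - apply (bounded_no_ray_up _ a (f a) (Hp (k + 1))).
    intros t Ht. apply HP. exists a, t. auto.
Qed.

Lemma bounded_graph n C f : bounded_condition M -> is_cell M n C -> def_fun M n C f ->
  bounded C -> bounded (graph C f).
Proof.
  intros HB HC Hf Hb. pose proof (cell_lies_in n C HC) as HL.
  apply (HB n (n + 1) C _ (cell_definable n C HC) Hf Hb).
  exists (fun w => exists x, C x /\ w = x ++ x ++ [f x]).
  split; [exact (def_graph_pairing M n C f HL Hf)|]. split; [|split].
  - intros z (x & Hx & ->). exists x, (x ++ [f x]). split; [reflexivity|].
    split; [exact Hx|exists x; auto].
  - intros x Hx. exists (x ++ [f x]). split; [eauto|].
    intros y (x' & Hx' & E).
    apply app_eq_len in E as [<- ->]; [reflexivity|].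
    rewrite (HL x Hx), (HL x' Hx'). reflexivity.
  - intros y (x & Hx & ->). exists x. split; [eauto|].
    intros x' (x'' & Hx'' & E). rewrite !app_assoc in E.
    apply app_inj_tail in E as [E _].
    assert (Hlen : length x' = length x'').
    { apply (f_equal (@length G)) in E. rewrite !length_app, (HL x Hx), (HL x'' Hx'') in E.
      rewrite (HL x'' Hx''). lia. }
    apply app_eq_len in E as [E1 E2]; [congruence|exact Hlen].
Qed.

Lemma lies_in_over n (C D : list G -> Prop) : lies_in n C -> lies_over C D -> lies_in (n + 1) D.
Proof.
  intros HL [HDC _] z Hz. destruct (HDC z Hz) as (x & t & -> & Hx).
  rewrite length_app, (HL x Hx). reflexivity.
Qed.

Lemma graph_value_bounds (C : list G -> Prop) f : bounded (graph C f) ->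
  exists b b', forall x, C x -> le b (f x) /\ le (f x) b'.
Proof.
  intros Hg. destruct (bounded_snoc_bounds _ Hg) as (b & b' & Hb).
  exists b, b'. intros x Hx. apply (Hb x). exists x. auto.
Qed.

Lemma bounded_snoc (C D : list G -> Prop) b b' : bounded C ->
  (forall z, D z -> exists x t, z = x ++ [t] /\ C x /\ le b t /\ le t b') ->
  bounded D.
Proof.
  intros (c & c' & Hc) HD.
  destruct (oag_lower_bound2 c b) as (lo & Hlo & Hlob).
  destruct (oag_upper_bound2 c' b') as (hi & Hhi & Hhib).
  exists lo, hi. intros z Hz. destruct (HD z Hz) as (x & t & -> & Hx & Hbt & Htb).
  apply Forall_app. split.
  - apply (Forall_impl _ (fun y Hy => conj (oag_le_trans Hlo (proj1 Hy))
      (oag_le_trans (proj2 Hy) Hhi)) (Hc x Hx)).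
  - constructor; [|constructor]. split; eapply oag_le_trans; eauto.
Qed.

Lemma good_band_has_both_bounds n C f g D : is_cell M n C ->
  ok_bound M n C f -> ok_bound M n C g -> lies_in (n + 1) D ->
  (forall z, D z <-> exists x t, z = x ++ [t] /\ C x /\ lower_ok G f x t /\ upper_ok G g x t) ->
  good M (n + 1) D -> exists f' g', f = Some f' /\ g = Some g'.
Proof.
  intros HC Hf Hg HL HD [Hne Hnb].
  assert (Hp : forall z, proj G (n + 1) D z <-> D z) by (intros z; exact (proj_self _ _ _ HL)).
  destruct f as [f|], g as [g|]; [eauto|exfalso..].
  - apply Hnb. split; [exact Hne|]. exists n, C, f.
    split; [lia|]. split; [exact HC|]. split; [exact (proj1 Hf)|].
    right. intros z. rewrite Hp, HD. firstorder.
  - apply Hnb. split; [exact Hne|]. exists n, C, g.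
    split; [lia|]. split; [exact HC|]. split; [exact (proj1 Hg)|].
    left. intros z. rewrite Hp, HD. firstorder.
  - apply Hne. exists n, C. split; [lia|]. split; [exact HC|].
    intros z. rewrite Hp, HD. firstorder.
Qed.

Lemma bounded_band n C f g D : bounded_condition M -> is_cell M n C ->
  def_fun M n C f -> def_fun M n C g -> bounded C ->
  (forall z, D z <-> exists x t, z = x ++ [t] /\ C x /\ lt G (f x) t /\ lt G t (g x)) ->
  bounded D.
Proof.
  intros HB HC Hf Hg HbC HD.
  destruct (graph_value_bounds C f (bounded_graph n C f HB HC Hf HbC)) as (b & ? & Hb).
  destruct (graph_value_bounds C g (bounded_graph n C g HB HC Hg HbC)) as (? & b' & Hb').
  apply (bounded_snoc C D b b' HbC). intros z Hz.
  apply HD in Hz as (a & t & -> & Ha & Hlo & Hup). exists a, t.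
  split; [reflexivity|]. split; [exact Ha|]. split.
  - left. exact (oag_le_lt_trans (proj1 (Hb a Ha)) Hlo).
  - left. exact (oag_lt_le_trans Hup (proj2 (Hb' a Ha))).
Qed.

Lemma good_bounded n C : bounded_condition M -> is_cell M n C -> good M n C -> bounded C.
Proof.
  intros HB. induction 1 as [D HD|n C f D HC IH Hf _ HD|n C f g D HC IH Hf Hg Hfg HD];
    intros Hgood.
  - exists (zero G), (zero G). intros x Hx. apply HD in Hx as ->. constructor.
  - pose proof (cell_lies_in n C HC) as HL.
    assert (Hover : lies_over C D).
    { split; [intros z Hz; apply HD in Hz as (x & Hx & ->); eauto|].
      intros x Hx. exists (f x). apply HD. eauto. }
    apply (bounded_sub _ (graph C f)); [intros z; apply HD|].
    exact (bounded_graph n C f HB HC Hf (IH (good_lies_over n C D HL Hover Hgood))).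
  - pose proof (cell_lies_in n C HC) as HL.
    assert (Hover : lies_over C D).
    { split; [intros z Hz; apply HD in Hz as (x & t & -> & Hx & _); eauto|].
      intros x Hx. destruct (band_fiber_nonempty C f g x Hx Hfg) as (t & Ht).
      exists t. apply HD. exists x, t. auto. }
    pose proof (IH (good_lies_over n C D HL Hover Hgood)) as HbC.
    destruct (good_band_has_both_bounds n C f g D HC Hf Hg (lies_in_over n C D HL Hover) HD Hgood)
      as (f' & g' & -> & ->).
    exact (bounded_band n C f' g' D HB HC (proj1 Hf) (proj1 Hg) HbC HD).
Qed.

End Cells.

Theorem lemma4p8 (G : OAG) (M : omin_exp G) :
  bounded_condition M ->
  forall (n : nat) (C : list G -> Prop), is_cell M n C ->
    (good M n C <-> bounded C).
Proof.
  intros HB n C HC. split.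
  - exact (good_bounded M n C HB HC).
  - exact (bounded_good M n C).
Qed.
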